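(* Let $G$ be a finite simple graph with $n$ vertices $v_1,\dots,v_n$ and let $\bar{\bar{d}}=\sqrt{\frac{d(v_1)^2+\cdots+d(v_n)^2}{n}}$. Let $u_1,u_2,\dots,u_r$, $r\geq 2$, be a $\beta$-sequence in $G$ such that $$d(u_1)+d(u_2)+\cdots+d(u_r)\leq (r-1)n.$$ Then $$r\geq \frac{n}{n-\bar{\bar{d}}}.$$
   Context: All graphs are finite, undirected, without loops or multiple edges; $d(v)$ is the degree of $v$ in $G$, $N(v)$ is the set of neighbours of $v$, and $N(u_1,\dots,u_k)=\bigcap_{i=1}^k N(u_i)$. A sequence $u_1,\dots,u_r$ of vertices of $G$ is a $\beta$-sequence if (i) $d(u_1)=\max\{d(v): v\in V(G)\}$ and (ii) for $2\le i\le r$, $u_i\in N(u_1,\dots,u_{i-1})$ and $d(u_i)=\max\{d(v): v\in N(u_1,\dots,u_{i-1})\}$. *)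

From mathcomp Require Import all_boot all_order all_algebra.
Set Implicit Arguments. Unset Strict Implicit. Unset Printing Implicit Defensive.
Import Order.TTheory GRing.Theory Num.Theory.

Definition simple_graph (V : finType) (e : rel V) : Prop :=
  symmetric e /\ irreflexive e.

Definition nbhd (V : finType) (e : rel V) (v : V) : {set V} := [set w | e v w].
Definition deg (V : finType) (e : rel V) (v : V) : nat := #|nbhd e v|.

Definition common_nbhd (V : finType) (e : rel V) (s : seq V) : {set V} :=
  [set w | all (fun u => e u w) s].

(* s = [:: u_1; ...; u_r] is a beta-sequence.  Index i (0-based) corresponds to
   u_{i+1}; take i s = [:: u_1; ...; u_i]. *)
Definition beta_seq (V : finType) (e : rel V) (s : seq V) : Prop :=
  match s with
  | [::] => False
  | u1 :: _ =>
      deg e u1 = \max_(v : V) deg e v /\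
      forall i : nat, 0 < i < size s ->
        nth u1 s i \in common_nbhd e (take i s) /\
        deg e (nth u1 s i) = \max_(v in common_nbhd e (take i s)) deg e v
  end.

Definition quad_mean_deg (R : rcfType) (V : finType) (e : rel V) : R :=
  Num.sqrt ((\sum_(v : V) (deg e v) ^ 2)%:R / (#|V|)%:R).

From mathcomp Require Import all_boot all_order all_algebra.
From mathcomp Require Import ring lra.
Import Order.TTheory GRing.Theory Num.Theory.
Set Implicit Arguments. Unset Strict Implicit. Unset Printing Implicit Defensive.

(* Index the beta-sequence from 0 and write a_j = d(u_j).  The a_j are
   nonincreasing, and a vertex v adjacent to u_0, ..., u_(j-1) but not to u_j
   has d(v) <= a_j.  Hence for every k < r,
     d(v)^2 <= a_k^2 + sum_(j < k, v not adjacent to u_j) (a_j^2 - a_k^2),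
   and summing over v gives, with b_j = n - a_j and B = sum_(j<k) b_j,
     sum_v d(v)^2 <= sum_(j<k) b_j (n - b_j)^2 + (n - B) a_k^2.
   Choosing k minimal with a_0 + ... + a_k <= k n forces a_k <= B <= n, and
   bounding each b (n - b)^2 by its tangent at n/(k+1) makes the right-hand
   side at most n (n - n/(k+1))^2 <= n (n - n/r)^2. *)
Lemma exists_balanced_prefix (a : nat -> nat) n r : 0 < r ->
  \sum_(i < r) a i <= (r - 1) * n ->
  exists2 k, k < r &
    \sum_(i < k.+1) a i <= k * n <= \sum_(i < k) a i + n.
Proof.
move=> r_gt0 sum_le.
pose P m := (0 < m <= r) && (\sum_(i < m) a i <= (m - 1) * n).
have [|[//|k] /andP [/andP [_ lt_kr] sum_k] k_min] := ex_minnP (ex_intro P r _).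
  by rewrite /P r_gt0 leqnn.
exists k => //; rewrite subn1 in sum_k; rewrite sum_k /=.
case: k lt_kr {sum_k} k_min => [|k] lt_kr k_min; first by rewrite mul0n.
have : ~~ P k.+1 by apply/negP => /k_min; rewrite ltnn.
by rewrite /P (ltnW lt_kr) subn1 -ltnNge mulSn addnC leq_add2r => /ltnW.
Qed.

Section TangentBound.

Local Open Scope ring_scope.

Variables (R : realFieldType) (n : R).

Lemma cubic_le_tangent t b : 0 <= b -> b <= n -> 2 * t <= n ->
  b * (n - b) ^+ 2 <= t * (n - t) ^+ 2 + (n - t) * (n - 3 * t) * (b - t).
Proof.
move=> b_ge0 b_le_n t_le.
have -> : b * (n - b) ^+ 2 = t * (n - t) ^+ 2 + (n - t) * (n - 3 * t) * (b - t)
    + (b - t) ^+ 2 * (b - (2 * n - 2 * t)) by ring.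
have : (b - t) ^+ 2 * (b - (2 * n - 2 * t)) <= 0.
  by apply: mulr_ge0_le0; [exact: sqr_ge0 | lra].
lra.
Qed.

Lemma tangent_sum_le t B k : 0 <= B -> 2 * t <= n -> k * t = n - t ->
  k * (t * (n - t) ^+ 2 - (n - t) * (n - 3 * t) * t)
    + (n - t) * (n - 3 * t) * B + (n - B) * B ^+ 2 <= n * (n - t) ^+ 2.
Proof.
move=> B_ge0 t_le kt.
have -> : k * (t * (n - t) ^+ 2 - (n - t) * (n - 3 * t) * t)
    = (k * t) * ((n - t) ^+ 2 - (n - t) * (n - 3 * t)) by ring.
rewrite kt.
have -> : (n - t) * ((n - t) ^+ 2 - (n - t) * (n - 3 * t))
    + (n - t) * (n - 3 * t) * B + (n - B) * B ^+ 2
    = n * (n - t) ^+ 2 - (B - (n - t)) ^+ 2 * (B - (2 * t - n)) by ring.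
have : 0 <= (B - (n - t)) ^+ 2 * (B - (2 * t - n)).
  by apply: mulr_ge0; [exact: sqr_ge0 | lra].
lra.
Qed.

Lemma sum_cubic_le k (b : nat -> R) c : 0 < n ->
  (forall j, (j < k)%N -> 0 <= b j <= n) -> 0 <= c ->
  c <= \sum_(j < k) b j -> \sum_(j < k) b j <= n ->
  \sum_(j < k) b j * (n - b j) ^+ 2 + (n - \sum_(j < k) b j) * c ^+ 2
    <= n * (n - n / k.+1%:R) ^+ 2.
Proof.
move=> n_gt0 b_in c_ge0; case: k b_in => [|k] b_in.
  rewrite !big_ord0 => c_le _; have -> : c = 0 by apply/le_anti/andP.
  by rewrite divr1 subrr expr0n /= !mulr0 addr0.
set B := \sum_(j < k.+1) b j => c_le B_le; set t := n / k.+2%:R.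
have kt : k.+1%:R * t = n - t.
  rewrite /t -[k.+2%:R]natr1; field.
  by rewrite gt_eqF //; have := ler0n R k; lra.
have t_le : 2 * t <= n.
  have : t <= k.+1%:R * t by rewrite ler_peMl ?ler1n // divr_ge0 ?ltW.
  lra.
have B_ge0 : 0 <= B by apply: sumr_ge0 => j _; have /andP [] := b_in j (ltn_ord j).
have sum_tangent : \sum_(j < k.+1) b j * (n - b j) ^+ 2
    <= k.+1%:R * (t * (n - t) ^+ 2 - (n - t) * (n - 3 * t) * t)
       + (n - t) * (n - 3 * t) * B.
  have tangent j : (j < k.+1)%N ->
      b j * (n - b j) ^+ 2 <= t * (n - t) ^+ 2 + (n - t) * (n - 3 * t) * (b j - t).
    by move=> /b_in /andP [b_ge0 b_le]; exact: cubic_le_tangent.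
  apply: le_trans (ler_sum _ (fun (j : 'I_k.+1) _ => tangent j (ltn_ord j))) _.
  rewrite big_split /= sumr_const card_ord -mulr_sumr sumrB sumr_const card_ord.
  rewrite -/B -[_ *+ k.+1]mulr_natl -[t *+ _]mulr_natl le_eqVlt.
  by apply/orP; left; apply/eqP; ring.
have : (n - B) * c ^+ 2 <= (n - B) * B ^+ 2.
  by rewrite ler_wpM2l ?subr_ge0 // ler_sqr ?nnegrE // (le_trans c_ge0).
have := tangent_sum_le B_ge0 t_le kt.
lra.
Qed.

End TangentBound.

Section BetaSequence.

Variables (V : finType) (e : rel V).

Lemma common_nbhd_nil : common_nbhd e [::] = [set: V].
Proof. by apply/setP => w; rewrite !inE. Qed.

Lemma common_nbhd_take_subset (s : seq V) i j : i <= j ->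
  common_nbhd e (take j s) \subset common_nbhd e (take i s).
Proof.
move=> le_ij; apply/subsetP => w; rewrite !inE.
by rewrite -(cat_take_drop i (take j s)) all_cat take_takel // => /andP [].
Qed.

Lemma mem_common_nbhd_take (s : seq V) x0 i w :
  (forall j, j < i -> j < size s -> e (nth x0 s j) w) ->
  w \in common_nbhd e (take i s).
Proof.
move=> adj; rewrite inE; apply/(all_nthP x0) => j; rewrite size_take_min.
rewrite leq_min => /andP [ji js]; rewrite nth_take //; exact: adj.
Qed.

Variables (u1 : V) (s' : seq V).
Hypothesis beta : beta_seq e (u1 :: s').

Local Notation s := (u1 :: s').
Local Notation a i := (deg e (nth u1 s i)).

Lemma beta_deg_nth i : i < size s ->
  a i = \max_(v in common_nbhd e (take i s)) deg e v.
Proof.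
case: beta => deg_u1 beta_next; case: i => [|i] lt_is /=.
  by rewrite common_nbhd_nil deg_u1; apply: eq_bigl => v; rewrite inE.
by have [] := beta_next i.+1 lt_is.
Qed.

Lemma beta_deg_ge i w : i < size s -> w \in common_nbhd e (take i s) ->
  deg e w <= a i.
Proof. by move=> lt_is w_in; rewrite beta_deg_nth //; exact: leq_bigmax_cond. Qed.

Lemma beta_deg_nonincreasing j k : j <= k -> k < size s -> a k <= a j.
Proof.
case: k => [|k] le_jk lt_ks; first by move: le_jk; rewrite leqn0 => /eqP ->.
have [_ beta_next] := beta; have [uk_in _] := beta_next k.+1 lt_ks.
apply: beta_deg_ge; first exact: leq_ltn_trans lt_ks.
exact: subsetP (common_nbhd_take_subset _ le_jk) _ uk_in.
Qed.

Local Open Scope ring_scope.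

Variable R : realFieldType.

Lemma deg_sqr_drop_ge0 k (j : 'I_k) v : (k < size s)%N ->
  0 <= (1 - (e (nth u1 s j) v)%:R) * ((a j)%:R ^+ 2 - (a k)%:R ^+ 2 : R).
Proof.
move=> lt_ks; apply: mulr_ge0; first by case: (e _ v); rewrite ?subrr ?subr0.
rewrite subr_ge0 -!natrX ler_nat leq_sqr.
by apply: beta_deg_nonincreasing => //; exact: ltnW.
Qed.

Lemma deg_sqr_le_beta k v : (k < size s)%N ->
  (deg e v)%:R ^+ 2 <= (a k)%:R ^+ 2 +
    \sum_(j < k) (1 - (e (nth u1 s j) v)%:R) * ((a j)%:R ^+ 2 - (a k)%:R ^+ 2 : R).
Proof.
move=> lt_ks.
have le_sqr i : (deg e v <= a i)%N -> (deg e v)%:R ^+ 2 <= (a i)%:R ^+ 2 :> R.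
  by move=> le_vi; rewrite -!natrX ler_nat leq_sqr.
have [/existsP [j nadj] | all_adj] :=
  boolP [exists j : 'I_k, ~~ e (nth u1 s j) v].
  have ex_nadj : exists j, (j < k)%N && ~~ e (nth u1 s j) v.
    by exists j; rewrite ltn_ord.
  case: (ex_minnP ex_nadj) => j0 /andP [lt_j0k nadj0] j0_min.
  have v_in : v \in common_nbhd e (take j0 s).
    apply: (mem_common_nbhd_take (x0 := u1)) => i lt_ij0 _; apply/negPn/negP => nadj_i.
    by have := j0_min i; rewrite nadj_i (ltn_trans lt_ij0 lt_j0k) leqNgt lt_ij0 => /(_ isT).
  have := le_sqr _ (beta_deg_ge (ltn_trans lt_j0k lt_ks) v_in).
  rewrite (bigD1 (Ordinal lt_j0k)) //= (negbTE nadj0) subr0 mul1r.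
  have : 0 <= \sum_(i < k | i != Ordinal lt_j0k) (1 - (e (nth u1 s i) v)%:R) *
      ((a i)%:R ^+ 2 - (a k)%:R ^+ 2 : R).
    by apply: sumr_ge0 => i _; exact: deg_sqr_drop_ge0.
  lra.
have v_in : v \in common_nbhd e (take k s).
  apply: (mem_common_nbhd_take (x0 := u1)) => i lt_ik _.
  by move: all_adj; rewrite negb_exists => /forallP /(_ (Ordinal lt_ik)); rewrite negbK.
have := le_sqr _ (beta_deg_ge lt_ks v_in).
have : 0 <= \sum_(j < k) (1 - (e (nth u1 s j) v)%:R) *
    ((a j)%:R ^+ 2 - (a k)%:R ^+ 2 : R).
  by apply: sumr_ge0 => j _; exact: deg_sqr_drop_ge0.
lra.
Qed.

Lemma sum_nonadj (u : V) : \sum_v (1 - (e u v)%:R : R) = #|V|%:R - (deg e u)%:R.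
Proof.
rewrite sumrB sumr_const -natr_sum /deg /nbhd; congr (_ - _%:R).
rewrite -sum1_card [RHS]big_mkcond /=.
by apply: eq_bigr => v _; rewrite inE; case: (e u v).
Qed.

Lemma sum_deg_sqr_le_beta k : (k < size s)%N ->
  \sum_v (deg e v)%:R ^+ 2 <= #|V|%:R * (a k)%:R ^+ 2 +
    \sum_(j < k) (#|V|%:R - (a j)%:R) * ((a j)%:R ^+ 2 - (a k)%:R ^+ 2 : R).
Proof.
move=> lt_ks.
apply: le_trans (ler_sum _ (fun v _ => @deg_sqr_le_beta k v lt_ks)) _.
rewrite big_split /= sumr_const exchange_big /= lerD //.
  by rewrite -[leLHS]mulr_natl.
by apply: ler_sum => j _; rewrite -mulr_suml sum_nonadj.
Qed.

Lemma beta_sum_deg_sqr_le k : (k < size s)%N ->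
  (\sum_(i < k.+1) a i <= k * #|V|)%N -> (k * #|V| <= \sum_(i < k) a i + #|V|)%N ->
  \sum_v (deg e v)%:R ^+ 2 <= #|V|%:R * (#|V|%:R - #|V|%:R / k.+1%:R) ^+ 2 :> R.
Proof.
move=> lt_ks sum_le sum_ge; set n : R := #|V|%:R; pose b j := n - (a j)%:R.
have n_gt0 : 0 < n by rewrite ltr0n; apply/card_gt0P; exists u1.
have sum_b : \sum_(j < k) b j = k%:R * n - \sum_(j < k) (a j)%:R.
  by rewrite sumrB sumr_const card_ord mulr_natl.
have ak_le : (a k)%:R <= \sum_(j < k) b j.
  by move: sum_le; rewrite -(ler_nat R) natr_sum natrM big_ord_recr /= sum_b -/n; lra.
have B_le : \sum_(j < k) b j <= n.
  by move: sum_ge; rewrite -(ler_nat R) natrD natr_sum natrM sum_b -/n; lra.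
have b_in j : (j < k)%N -> 0 <= b j <= n.
  by move=> _; rewrite subr_ge0 ler_nat max_card gerBl ler0n.
have split_sum : \sum_(j < k) (n - (a j)%:R) * ((a j)%:R ^+ 2 - (a k)%:R ^+ 2)
    = \sum_(j < k) b j * (n - b j) ^+ 2 - (\sum_(j < k) b j) * (a k)%:R ^+ 2.
  by rewrite mulr_suml -sumrB; apply: eq_bigr => j _; rewrite /b; ring.
apply: le_trans (sum_deg_sqr_le_beta lt_ks) _; rewrite -/n split_sum.
have := sum_cubic_le n_gt0 b_in (ler0n _ (a k)) ak_le B_le.
by rewrite mulrBl addrCA.
Qed.

End BetaSequence.

Local Open Scope ring_scope.

Lemma div_sub_sqrt_le (R : rcfType) (n Q : R) (m r : nat) : 0 < n ->
  (0 < m <= r)%N -> Q <= n * (n - n / m%:R) ^+ 2 ->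
  n / (n - Num.sqrt (Q / n)) <= r%:R.
Proof.
move=> n_gt0 /andP [m_gt0 le_mr] Q_le.
have m_pos : 0 < m%:R :> R by rewrite ltr0n.
have r_pos : 0 < r%:R :> R by rewrite ltr0n (leq_trans m_gt0).
set x := n / r%:R; set y := n / m%:R.
have x_gt0 : 0 < x by rewrite divr_gt0.
have x_le_y : x <= y.
  by apply: ler_wpM2l; [exact: ltW | rewrite lef_pV2 ?posrE // ler_nat].
have y_le_n : y <= n.
  by rewrite /y ler_pdivrMr //; apply: ler_peMr; [exact: ltW | rewrite ler1n].
have sqrt_le : Num.sqrt (Q / n) <= n - y.
  have : Q / n <= (n - y) ^+ 2 by rewrite ler_pdivrMr // mulrC.
  by move=> /ler_wsqrtr; rewrite sqrtr_sqr ger0_norm // subr_ge0.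
have r_x : r%:R * x = n by rewrite mulrC divfK ?gt_eqF.
rewrite ler_pdivrMr; last lra.
by rewrite -{1}r_x; apply: ler_wpM2l; [exact: ltW | lra].
Qed.

Theorem corollary4p2 (R : rcfType) (V : finType) (e : rel V) (s : seq V) :
  simple_graph e ->
  beta_seq e s ->
  (2 <= size s)%N ->
  (\sum_(u <- s) deg e u <= (size s - 1) * #|V|)%N ->
  (#|V|%:R / (#|V|%:R - quad_mean_deg R e) <= (size s)%:R :> R).
Proof.
move=> _ beta _; case: s beta => [//|u1 s'] beta.
rewrite (big_nth u1) big_mkord.
pose a i := deg e (nth u1 (u1 :: s') i).
case/(exists_balanced_prefix (a := a) (ltn0Sn (size s'))).
move=> k lt_kr /andP [sum_le sum_ge].
rewrite /quad_mean_deg natr_sum (eq_bigr (fun v => (deg e v)%:R ^+ 2)) => [|v _];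
  last by rewrite natrX.
apply: div_sub_sqrt_le (beta_sum_deg_sqr_le beta R lt_kr sum_le sum_ge) => //.
by rewrite ltr0n; apply/card_gt0P; exists u1.
Qed.
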